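(* The (a priori) Recursive Measure satisfies the strong subadditivity blocker postulate. For every SVG $\mathcal{G}$ on $N$ and every bloc $I\subseteq N$ that contains at least one YES-blocker, or that contains at least one NO-blocker, we have $$\widehat{RM'}_I\le\sum_{k\in I}RM'_k(\mathcal{G}).$$ Consequently RM also satisfies the weak subadditivity blocker postulate.
   Context: A simple voting game (SVG) is a pair $\mathcal{G}=(N,\mathcal{W})$ with $N$ a nonempty finite set of $n$ players and $\mathcal{W}\subseteq 2^N$ (the winning sets) such that: - $\mathcal{W}$ is monotone; - $\emptyset\notin\mathcal{W}$ and $N\in\mathcal{W}$. A division is $(S,N\setminus S)$ with $S\subseteq N$ the YES-voters; it is winning if $S\in\mathcal{W}$ and losing otherwise. Decisiveness and success: - Player $k$ is YES-decisive in $S$ if $k\in S\in\mathcal{W}$ and $S\setminus\{k\}\notin\mathcal{W}$. - Player $k$ is NO-decisive in $S$ if $k\notin S\notin\mathcal{W}$ and $S\cup\{k\}\in\mathcal{W}$. - Player $k$ is decisive if it is either. - Player $k$ is successful in $S$ if ($k\in S$ and $S\in\mathcal{W}$) or ($k\notin S$ and $S\notin\mathcal{W}$). Loyal children: if $S\in\mathcal{W}$, the loyal children of $S$ are the divisions $S\setminus\{m\}$ with $m\in S$ and $S\setminus\{m\}\in\mathcal{W}$. If $S\notin\mathcal{W}$, they are the divisions $S\cup\{m\}$ with $m\notin S$ and $S\cup\{m\}\notin\mathcal{W}$. The recursive efficacy score $\alpha_k(S)$ is defined by: - $\alpha_k(S)=1$ if $k$ is decisive in $S$; - $\alpha_k(S)=0$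 if $k$ is not successful in $S$; - otherwise, $\alpha_k(S)$ is the average of $\alpha_k$ over the (nonempty) set of loyal children of $S$. The a priori Recursive Measure is $RM'_k=2^{-n}\sum_{S\subseteq N}\alpha_k(S)$. Blockers: $b$ is a YES-blocker if $b\in S$ for all $S\in\mathcal{W}$, and a NO-blocker if $b\notin S$ for all $S\notin\mathcal{W}$. Bloc game: for a bloc $I$ with lead member $i\in I$, $\hat{\mathcal{G}}$ has players $(N\setminus I)\cup\{i\}$ and winning sets $$\{S\cup\{i\}:S\subseteq N\setminus I,\ S\cup I\in\mathcal{W}\}\cup\{S:S\subseteq N\setminus I,\ S\in\mathcal{W}\}.$$ $\widehat{RM'}_I$ is $RM'_i$ in $\hat{\mathcal{G}}$. *)

From mathcomp Require Import all_boot all_order all_algebra.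
Set Implicit Arguments. Unset Strict Implicit. Unset Printing Implicit Defensive.
Import Order.TTheory GRing.Theory Num.Theory.
Local Open Scope ring_scope.

Section SVG.
Variable T : finType.

Definition is_SVG (N : {set T}) (W : {set {set T}}) : Prop :=
  [/\ N != set0,
      (forall S : {set T}, S \in W -> S \subset N),
      (forall S S' : {set T}, S \in W -> S \subset S' -> S' \subset N -> S' \in W),
      set0 \notin W &
      N \in W].

Definition yes_decisive (W : {set {set T}}) (k : T) (S : {set T}) : bool :=
  [&& k \in S, S \in W & S :\ k \notin W].

Definition no_decisive (W : {set {set T}}) (k : T) (S : {set T}) : bool :=
  [&& k \notin S, S \notin W & k |: S \in W].

Definition decisive W k S : bool := yes_decisive W k S || no_decisive W k S.

Definition successful (W : {set {set T}}) (k : T) (S : {set T}) : bool :=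
  ((k \in S) && (S \in W)) || ((k \notin S) && (S \notin W)).

Definition loyal_children (N : {set T}) (W : {set {set T}}) (S : {set T})
  : {set {set T}} :=
  if S \in W then [set S :\ m | m in [set m in S | S :\ m \in W]]
  else [set m |: S | m in [set m in N :\: S | m |: S \notin W]].

(* Recursive efficacy score, computed with explicit fuel; the recursion depth
   never exceeds #|N|, so fuel #|N|.+1 computes the true value. *)
Fixpoint alpha_fuel (fuel : nat) (N : {set T}) (W : {set {set T}}) (k : T)
  (S : {set T}) : rat :=
  match fuel with
  | 0 => 0
  | n.+1 =>
    if decisive W k S then 1
    else if ~~ successful W k S then 0
    else (\sum_(C in loyal_children N W S) alpha_fuel n N W k C)
           / (#|loyal_children N W S|)%:R
  end.

Definition alpha (N : {set T}) (W : {set {set T}}) (k : T) (S : {set T}) : rat := alpha_fuel #|N|.+1 N W k S.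

Definition RM' (N : {set T}) (W : {set {set T}}) (k : T) : rat :=
  (\sum_(S in powerset N) alpha N W k S) / (2 ^ #|N|)%:R.

Definition yes_blocker (W : {set {set T}}) (b : T) : Prop :=
  forall S : {set T}, S \in W -> b \in S.

Definition no_blocker (N : {set T}) (W : {set {set T}}) (b : T) : Prop :=
  forall S : {set T}, S \subset N -> S \notin W -> b \notin S.

Definition bloc_players (N I : {set T}) (i : T) : {set T} :=
  (N :\: I) :|: [set i].

Definition bloc_game (N : {set T}) (W : {set {set T}}) (I : {set T}) (i : T)
  : {set {set T}} :=
  [set S :|: [set i] | S in [set S in powerset (N :\: I) | S :|: I \in W]]
  :|: [set S in powerset (N :\: I) | S \in W].

Definition RM'_bloc (N : {set T}) (W : {set {set T}}) (I : {set T}) (i : T) : rat :=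
  RM' (bloc_players N I i) (bloc_game N W I i) i.

End SVG.

From mathcomp Require Import all_boot all_order all_algebra.
From mathcomp Require Import zify.
Import Order.TTheory GRing.Theory Num.Theory.
Local Open Scope ring_scope.
Set Implicit Arguments. Unset Strict Implicit. Unset Printing Implicit Defensive.

(* Let X = N \ I, let b in I be a blocker and write u S for the sum of the
   efficacy scores alpha_k S of the members k of I.  Both sides of the inequality
   are averages over divisions: the bloc game has the divisions A and i+A
   (A in X), the original game has A+J and A+J+b (J in I \ b).  So it suffices
   to show alpha_i A + alpha_i (i+A) <= u (A+J) + u (A+J+b) in every such block.
   If A loses but A+I wins, both u terms are at least 1 while alpha <= 1.
   Otherwise one of the two bloc terms is 0 (i is unsuccessful) and the other is
   compared to the matching u term by induction along loyal children: since the
   game is monotone, every alpha_k, hence u, is the mean of its values on the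
   loyal children, and the loyal moves of the bloc game other than i's own move
   are loyal moves of the original game, whose remaining loyal moves are made
   by members of I other than b. *)

Section Averages.
Variables (R : numFieldType) (T : finType).
Implicit Types (P Q M : {set T}) (f g : T -> R).

Lemma sumr_le_subset P Q f :
  P \subset Q -> {in Q, forall x, 0 <= f x} ->
  \sum_(x in P) f x <= \sum_(x in Q) f x.
Proof.
move=> PQ f0; rewrite [X in _ <= X](big_setID P) /= (setIidPr PQ) lerDl.
by apply: sumr_ge0 => x; rewrite inE => /andP[_]; apply: f0.
Qed.

(* [a] is the mean of [f] over [P] plus one zero term and [c] the mean of [g]
   over [M]; each term of the first mean is dominated by a term of the second,
   the zero term by the element [x] of [M] (which is not compared). *)
Lemma mean_le P M (x : T) f g (a c : R) :
  P \subset M -> 0 <= a -> 0 <= c ->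
  a * #|P|.+1%:R = \sum_(m in P) f m -> c * #|M|%:R = \sum_(m in M) g m ->
  {in M, forall m, 0 <= g m} -> {in P, forall m, f m <= g m} ->
  {in M :\: P, forall m, m != x -> a <= g m} -> a <= c.
Proof.
move=> PM a0 c0 ha hc g0 fg ag.
have [M0|Mgt0] := posnP #|M|.
  have P0 : P = set0 by apply/eqP; rewrite -cards_eq0 -leqn0 -M0 subset_leq_card.
  by move: ha; rewrite P0 big_set0 cards0 mulr1 => ->.
set Q := M :\: P :\ x.
have cardM : (#|M| <= #|P|.+1 + #|Q|)%N.
  rewrite -(cardsID P M) (setIidPr PM) (cardsD1 x (M :\: P)) -/Q.
  by case: (x \in M :\: P); lia.
rewrite -(ler_pM2r (_ : 0 < #|M|%:R)) ?ltr0n // hc.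
apply: le_trans (_ : a * (#|P|.+1 + #|Q|)%:R <= _).
  by apply: ler_wpM2l => //; rewrite ler_nat.
rewrite natrD mulrDr ha mulr_natr -sumr_const [X in _ <= X](big_setID P) /= (setIidPr PM).
apply: lerD; first exact: ler_sum.
apply: le_trans (_ : \sum_(m in Q) g m <= _).
  by apply: ler_sum => m; rewrite !inE => /andP[mx mMP]; apply: ag; rewrite ?inE.
apply: sumr_le_subset; first exact: subsetDl.
by move=> m; rewrite inE => /andP[_]; apply: g0.
Qed.
End Averages.

Lemma setD1_id (T : finType) (A : {set T}) x : x \notin A -> A :\ x = A.
Proof. by move=> xA; apply/setDidPl; rewrite disjoint_sym disjoints1. Qed.

Lemma setU1D1 (T : finType) (A : {set T}) x y : y != x -> (x |: A) :\ y = x |: (A :\ y).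
Proof. by move=> yx; rewrite setDUl setD1_id // inE. Qed.

Section RecursiveEfficacy.
Variables (T : finType) (N : {set T}) (W : {set {set T}}).
Implicit Types (S C : {set T}) (k m : T).

(* The number of loyal moves still possible from [S]; it strictly decreases
   along loyal children, so fuel [#|N|.+1] is never exhausted. *)
Definition loyal_depth S := if S \in W then #|S| else #|N :\: S|.

Definition loyal_joiners S := [set m in N :\: S | m |: S \notin W].
Definition loyal_leavers S := [set m in S | S :\ m \in W].

Lemma loyal_children_losing S :
  S \notin W -> loyal_children N W S = [set m |: S | m in loyal_joiners S].
Proof. by rewrite /loyal_children => /negbTE ->. Qed.

Lemma loyal_children_winning S :
  S \in W -> loyal_children N W S = [set S :\ m | m in loyal_leavers S].
Proof. by rewrite /loyal_children => ->. Qed.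

Lemma setU1_inj_joiners S : {in loyal_joiners S &, injective (fun m => m |: S)}.
Proof.
move=> m1 m2; rewrite !inE => /andP[/andP[m1S _] _] _ e.
have : m1 \in m2 |: S by rewrite -e setU11.
by rewrite in_setU1 (negbTE m1S) orbF => /eqP.
Qed.

Lemma setD1_inj_leavers S : {in loyal_leavers S &, injective (fun m => S :\ m)}.
Proof.
move=> m1 m2; rewrite !inE => /andP[m1S _] _ e.
have : m1 \notin S :\ m2 by rewrite -e setD11.
by rewrite in_setD1 m1S andbT negbK => /eqP.
Qed.

Lemma loyal_depth_child S C :
  C \in loyal_children N W S -> (loyal_depth C < loyal_depth S)%N.
Proof.
rewrite /loyal_children /loyal_depth.
case: ifP => SW /imsetP[m]; rewrite inE => /andP[mS CW] ->.
  by rewrite CW (cardsD1 m S) mS.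
by rewrite (negbTE CW) (cardsD1 m (N :\: S)) mS setDDl setUC.
Qed.

Lemma loyal_depth_le S : S \subset N -> (loyal_depth S <= #|N|)%N.
Proof.
by rewrite /loyal_depth => SN; case: ifP => _; apply: subset_leq_card; rewrite ?subsetDl.
Qed.

Lemma alpha_fuel_bounds fuel k S : 0 <= alpha_fuel fuel N W k S <= 1.
Proof.
elim: fuel S => [|fuel IH] S //=.
case: ifP => _ //; case: ifP => _ //.
set L := loyal_children N W S.
have [->|Lgt0] := posnP #|L|; first by rewrite invr0 mulr0 lexx ler01.
rewrite divr_ge0 ?sumr_ge0 // => [|C _]; last by case/andP: (IH C).
rewrite ler_pdivrMr ?ltr0n // mul1r -sum1_card natr_sum.
by apply: ler_sum => C _; case/andP: (IH C).
Qed.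

Lemma alpha_fuel_enough fuel fuel' k S :
  (loyal_depth S < fuel)%N -> (loyal_depth S < fuel')%N ->
  alpha_fuel fuel N W k S = alpha_fuel fuel' N W k S.
Proof.
elim: fuel fuel' S => [|fuel IH] [|fuel'] S //= lt_fuel lt_fuel'.
case: ifP => // _; case: ifP => // _; congr (_ / _); apply: eq_bigr => C CL.
by apply: IH; apply: leq_trans (loyal_depth_child CL) _; rewrite -ltnS.
Qed.

Lemma alpha_ge0 k S : 0 <= alpha N W k S.
Proof. by case/andP: (alpha_fuel_bounds #|N|.+1 k S). Qed.

Lemma alpha_le1 k S : alpha N W k S <= 1.
Proof. by case/andP: (alpha_fuel_bounds #|N|.+1 k S). Qed.

Lemma alphaE k S : S \subset N ->
  alpha N W k S =
    if decisive W k S then 1 else if ~~ successful W k S then 0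
    else (\sum_(C in loyal_children N W S) alpha N W k C)
         / #|loyal_children N W S|%:R.
Proof.
move=> SN; rewrite {1}/alpha /=; case: ifP => // _; case: ifP => // _.
congr (_ / _); apply: eq_bigr => C CL.
by apply: alpha_fuel_enough; have := loyal_depth_child CL; have := loyal_depth_le SN; lia.
Qed.

Lemma alpha_decisive k S : S \subset N -> decisive W k S -> alpha N W k S = 1.
Proof. by move=> SN dec; rewrite alphaE // dec. Qed.

Lemma alpha_yes_decisive {k S} :
  S \subset N -> S \in W -> k \in S -> S :\ k \notin W -> alpha N W k S = 1.
Proof.
by move=> SN SW kS SkW; rewrite alpha_decisive // /decisive /yes_decisive kS SW SkW.
Qed.

Lemma alpha_no_decisive {k S} :
  S \subset N -> S \notin W -> k \notin S -> k |: S \in W -> alpha N W k S = 1.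
Proof.
move=> SN SW kS kSW; rewrite alpha_decisive //.
by rewrite /decisive /no_decisive kS SW kSW orbT.
Qed.

Lemma alpha_losing_mem k S : S \subset N -> S \notin W -> k \in S -> alpha N W k S = 0.
Proof.
move=> SN SW kS; rewrite alphaE // /decisive /yes_decisive /no_decisive.
by rewrite /successful kS (negbTE SW).
Qed.

Lemma alpha_winning_notin k S : S \subset N -> S \in W -> k \notin S -> alpha N W k S = 0.
Proof.
move=> SN SW kS; rewrite alphaE // /decisive /yes_decisive /no_decisive.
by rewrite /successful (negbTE kS) SW.
Qed.

Lemma alpha_losing k S : S \subset N -> S \notin W -> k \notin S -> k |: S \notin W ->
  alpha N W k S * #|loyal_joiners S|%:R = \sum_(m in loyal_joiners S) alpha N W k (m |: S).
Proof.
move=> SN SW kS kSW; have [/cards0_eq->|Jgt0] := posnP #|loyal_joiners S|.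
  by rewrite cards0 mulr0 big_set0.
rewrite alphaE // /decisive /yes_decisive /no_decisive /successful.
rewrite (negbTE kS) (negbTE SW) (negbTE kSW) /= loyal_children_losing //.
by rewrite big_imset ?card_in_imset ?divfK ?pnatr_eq0 -?lt0n //; apply: setU1_inj_joiners.
Qed.

Lemma alpha_winning k S : S \subset N -> S \in W -> k \in S -> S :\ k \in W ->
  alpha N W k S * #|loyal_leavers S|%:R = \sum_(m in loyal_leavers S) alpha N W k (S :\ m).
Proof.
move=> SN SW kS SkW; have [/cards0_eq->|Lgt0] := posnP #|loyal_leavers S|.
  by rewrite cards0 mulr0 big_set0.
rewrite alphaE // /decisive /yes_decisive /no_decisive /successful kS SW SkW /=.
rewrite loyal_children_winning //.
by rewrite big_imset ?card_in_imset ?divfK ?pnatr_eq0 -?lt0n //; apply: setD1_inj_leavers.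
Qed.

Lemma loyal_joiner_subset S m :
  S \subset N -> m \in loyal_joiners S -> m |: S \subset N.
Proof. by move=> SN; rewrite !inE => /andP[/andP[_ mN] _]; rewrite subUset sub1set mN. Qed.

Lemma loyal_joiner_losing S m : m \in loyal_joiners S -> m |: S \notin W.
Proof. by rewrite inE => /andP[]. Qed.

Lemma loyal_leaver_winning S m : m \in loyal_leavers S -> S :\ m \in W.
Proof. by rewrite inE => /andP[]. Qed.

Lemma no_blocker_winning b S : no_blocker N W b -> S \subset N -> b \in S -> S \in W.
Proof. by move=> nb SN; apply: contraTT => /(nb _ SN). Qed.

Hypothesis W_monotone :
  forall S S', S \in W -> S \subset S' -> S' \subset N -> S' \in W.

Lemma alpha_losing_mean k S : k \in N -> S \subset N -> S \notin W ->
  alpha N W k S * #|loyal_joiners S|%:R = \sum_(m in loyal_joiners S) alpha N W k (m |: S).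
Proof.
move=> kN SN SW.
have joinerN m : m \in loyal_joiners S -> m |: S \subset N by apply: loyal_joiner_subset.
have [kS|kS] := boolP (k \in S).
  rewrite alpha_losing_mem // mul0r big1 // => m mJ.
  by rewrite alpha_losing_mem ?joinerN ?loyal_joiner_losing ?setU1r.
have [kSW|kSW] := boolP (k |: S \in W); last exact: alpha_losing.
rewrite alpha_no_decisive // mul1r -sum1_card natr_sum; apply: eq_bigr => m mJ.
have km : k != m by apply: contraNneq (loyal_joiner_losing mJ) => <-.
rewrite alpha_no_decisive ?joinerN ?loyal_joiner_losing //.
  by rewrite in_setU1 negb_or km.
apply: W_monotone kSW _ _; first by rewrite setUS // subsetUr.
by rewrite subUset sub1set kN joinerN.
Qed.

Lemma alpha_winning_mean k S : S \subset N -> S \in W ->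
  alpha N W k S * #|loyal_leavers S|%:R = \sum_(m in loyal_leavers S) alpha N W k (S :\ m).
Proof.
move=> SN SW.
have leaverN m : S :\ m \subset N by apply: subset_trans (subsetDl _ _) SN.
have [kS|kS] := boolP (k \in S); last first.
  rewrite alpha_winning_notin // mul0r big1 // => m mL.
  by rewrite alpha_winning_notin ?loyal_leaver_winning // in_setD1 (negbTE kS) andbF.
have [SkW|SkW] := boolP (S :\ k \in W); first exact: alpha_winning.
rewrite alpha_yes_decisive // mul1r -sum1_card natr_sum; apply: eq_bigr => m mL.
have mk : m != k by apply: contraNneq SkW => <-; apply: loyal_leaver_winning.
rewrite alpha_yes_decisive ?(loyal_leaver_winning mL) // ?in_setD1 1?eq_sym ?mk //.
apply: contra SkW => SmkW; apply: W_monotone SmkW _ (leaverN k).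
by rewrite setDDl setUC -setDDl subsetDl.
Qed.

Lemma card_joiner_lt S m : m \in loyal_joiners S -> (#|N :\: (m |: S)| < #|N :\: S|)%N.
Proof. by rewrite inE => /andP[mNS _]; rewrite (cardsD1 m (N :\: S)) mNS setDDl setUC. Qed.

Lemma card_leaver_lt S m : m \in loyal_leavers S -> (#|S :\ m| < #|S|)%N.
Proof. by rewrite inE => /andP[mS _]; rewrite (cardsD1 m S) mS. Qed.

Implicit Types I : {set T}.

Definition alpha_sum (I S : {set T}) := \sum_(k in I) alpha N W k S.

Lemma alpha_sum_ge0 I S : 0 <= alpha_sum I S.
Proof. by apply: sumr_ge0 => k _; apply: alpha_ge0. Qed.

Lemma alpha_le_alpha_sum I S k : k \in I -> alpha N W k S <= alpha_sum I S.
Proof.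
by move=> kI; rewrite /alpha_sum (bigD1 k) //= lerDl sumr_ge0 // => j _; apply: alpha_ge0.
Qed.

Lemma alpha_sum_losing_mean I S : I \subset N -> S \subset N -> S \notin W ->
  alpha_sum I S * #|loyal_joiners S|%:R = \sum_(m in loyal_joiners S) alpha_sum I (m |: S).
Proof.
move=> IN SN SW; rewrite /alpha_sum mulr_suml exchange_big /=.
by apply: eq_bigr => k kI; apply: alpha_losing_mean; rewrite ?(subsetP IN).
Qed.

Lemma alpha_sum_winning_mean I S : S \subset N -> S \in W ->
  alpha_sum I S * #|loyal_leavers S|%:R = \sum_(m in loyal_leavers S) alpha_sum I (S :\ m).
Proof.
move=> SN SW; rewrite /alpha_sum mulr_suml exchange_big /=.
by apply: eq_bigr => k kI; apply: alpha_winning_mean.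
Qed.

Lemma alpha_sum_ge1_losing I S : I \subset N -> S \subset N -> S \notin W ->
  S :|: I \in W -> 1 <= alpha_sum I S.
Proof.
move=> IN; have [n] := ubnP #|N :\: S|; elim: n S => // n IH S Sn SN SW SIW.
have [J0|Jgt0] := posnP #|loyal_joiners S|.
  have [k kI kS] : exists2 k, k \in I & k \notin S.
    by apply/subsetPn; apply: contraNN SW => /setUidPl <-.
  have kSW : k |: S \in W.
    apply: contraT => kSW; suff: (0 < #|loyal_joiners S|)%N by rewrite J0.
    by apply/card_gt0P; exists k; rewrite !inE kS (subsetP IN) // kSW.
  by rewrite -(alpha_no_decisive SN SW kS kSW) alpha_le_alpha_sum.
rewrite -(ler_pM2r (_ : 0 < #|loyal_joiners S|%:R)) ?ltr0n //.
rewrite alpha_sum_losing_mean // mul1r -sumr_const; apply: ler_sum => m mJ.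
have mSN := loyal_joiner_subset SN mJ.
apply: IH => //; first by have := card_joiner_lt mJ; lia.
  exact: loyal_joiner_losing.
by apply: W_monotone SIW _ _; rewrite ?setSU ?subsetUr // subUset IN mSN.
Qed.

Lemma alpha_sum_ge1_winning I S : S \subset N -> S \in W ->
  S :\: I \notin W -> 1 <= alpha_sum I S.
Proof.
have [n] := ubnP #|S|; elim: n S => // n IH S Sn SN SW SIW.
have [L0|Lgt0] := posnP #|loyal_leavers S|.
  have [k kS kI] : exists2 k, k \in S & k \in I.
    apply/exists_inP; apply: contraNT SIW => /exists_inPn SI.
    by rewrite (setDidPl _) // disjoints_subset; apply/subsetP => x /SI; rewrite inE.
  have SkW : S :\ k \notin W.
    apply/negP => SkW; suff: (0 < #|loyal_leavers S|)%N by rewrite L0.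
    by apply/card_gt0P; exists k; rewrite inE kS.
  by rewrite -(alpha_yes_decisive SN SW kS SkW) alpha_le_alpha_sum.
rewrite -(ler_pM2r (_ : 0 < #|loyal_leavers S|%:R)) ?ltr0n //.
rewrite alpha_sum_winning_mean // mul1r -sumr_const; apply: ler_sum => m mL.
apply: IH; first by have := card_leaver_lt mL; lia.
- exact: subset_trans (subsetDl _ _) SN.
- exact: loyal_leaver_winning.
apply: contra SIW => SmIW; apply: W_monotone SmIW _ (subset_trans (subsetDl _ _) SN).
by rewrite setDDl setUC -setDDl subsetDl.
Qed.

Lemma alpha_sum_ge1_yes_blocker I b S : I \subset N -> b \in I -> yes_blocker W b ->
  S \subset N -> S :|: I \in W -> 1 <= alpha_sum I S.
Proof.
move=> IN bI yb SN SIW; have [SW|SW] := boolP (S \in W); last first.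
  exact: alpha_sum_ge1_losing.
have SbW : S :\ b \notin W by apply/negP => /yb; rewrite setD11.
by rewrite -(alpha_yes_decisive SN SW (yb _ SW) SbW) alpha_le_alpha_sum.
Qed.

Lemma alpha_sum_ge1_no_blocker I b S : I \subset N -> b \in I -> no_blocker N W b ->
  S \subset N -> S :\: I \notin W -> 1 <= alpha_sum I S.
Proof.
move=> IN bI nb SN SIW; have [SW|SW] := boolP (S \in W).
  exact: alpha_sum_ge1_winning.
have bSW : b |: S \in W.
  by apply: no_blocker_winning nb _ (setU11 _ _); rewrite subUset sub1set (subsetP IN).
by rewrite -(alpha_no_decisive SN SW (nb _ SN SW) bSW) alpha_le_alpha_sum.
Qed.
End RecursiveEfficacy.

Section BlocGame.
Variables (T : finType) (N : {set T}) (W : {set {set T}}) (I : {set T}) (i b : T).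
Hypotheses (W_monotone :
    forall S S' : {set T}, S \in W -> S \subset S' -> S' \subset N -> S' \in W)
  (IN : I \subset N) (iI : i \in I) (bI : b \in I).

Local Notation X := (N :\: I).
Local Notation G := (bloc_game N W I i).
Local Notation v := (alpha (bloc_players N I i) G i).
Local Notation u := (alpha_sum N W I).
Implicit Types (A B J S : {set T}) (m : T).

Lemma bloc_playersE : bloc_players N I i = i |: X.
Proof. by rewrite /bloc_players setUC. Qed.

Lemma notin_outsiders x A : x \in I -> A \subset X -> x \notin A.
Proof. by move=> xI AX; apply: contraL xI => /(subsetP AX); rewrite inE => /andP[]. Qed.

Lemma outsiders_disjoint A : A \subset X -> [disjoint A & I].
Proof. by move=> AX; rewrite disjoints_subset (subset_trans AX) // setDE subsetIr. Qed.

Lemma setDU_outsiders A B : A \subset X -> B \subset I -> (A :|: B) :\: I = A.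
Proof.
move=> AX BI; rewrite setDUl (setDidPl (outsiders_disjoint AX)).
by rewrite (_ : B :\: I = set0) ?setU0 //; apply/eqP; rewrite setD_eq0.
Qed.

Lemma outsiders_subset A : A \subset X -> A \subset N.
Proof. by move=> AX; apply: subset_trans AX (subsetDl _ _). Qed.

Lemma bloc_game_out A : A \subset X -> (A \in G) = (A \in W).
Proof.
move=> AX; rewrite /bloc_game in_setU [in X in _ || X]inE powersetE AX /=.
apply: orb_idl => /imsetP[S _ eA]; case/negP: (notin_outsiders iI AX).
by rewrite eA in_setU set11 orbT.
Qed.

Lemma bloc_game_in A : A \subset X -> (i |: A \in G) = (A :|: I \in W).
Proof.
move=> AX; rewrite /bloc_game in_setU [in X in _ || X]inE powersetE.
have -> : i |: A \subset X = false.
  by apply: contraTF iI => /subsetP/(_ i (setU11 _ _)); rewrite inE => /andP[].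
rewrite andFb orbF; apply/imsetP/idP => [[S] | AIW]; last first.
  by exists A; rewrite 1?setUC // inE powersetE AX.
rewrite inE powersetE => /andP[SX SIW] eS.
suff -> : A = S by [].
by rewrite -(setU1K (notin_outsiders iI AX)) eS setUC setU1K // notin_outsiders.
Qed.

Section YesBlocker.
Hypothesis yb : yes_blocker W b.

Lemma bloc_alpha_losing_mean A : A \subset X -> A :|: I \notin W ->
  v A * #|X :\: A|.+1%:R = \sum_(m in X :\: A) v (m |: A).
Proof.
move=> AX AIW; have iA := notin_outsiders iI AX.
have losing_out S : S \subset X -> S \notin G.
  by move=> SX; rewrite bloc_game_out //; apply: contra (notin_outsiders bI SX) => /yb.
have iAG : i |: A \notin G by rewrite bloc_game_in.
have AN' : A \subset bloc_players N I i by rewrite bloc_playersE (subset_trans AX) ?subsetU1.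
have joinersE : loyal_joiners (bloc_players N I i) G A = i |: (X :\: A).
  apply/setP => m; rewrite /loyal_joiners inE bloc_playersE.
  have [->|mi] := eqVneq m i; first by rewrite in_setD iA !setU11 iAG.
  rewrite in_setD in_setU1 (negbTE mi) /= [RHS]in_setU1 (negbTE mi) [RHS]in_setD.
  case: (m \in A) => //=; case mX: (m \in X) => //=.
  by rewrite losing_out // subUset sub1set mX AX.
have vi0 : v (i |: A) = 0.
  by apply: alpha_losing_mem; rewrite ?setU11 // bloc_playersE setUS.
have iXA : i \notin X :\: A by rewrite !inE iI andbF.
have := alpha_losing AN' (losing_out _ AX) iA iAG.
by rewrite joinersE big_setU1 //= vi0 add0r cardsU1 iXA.
Qed.

Lemma bloc_alpha_le_yes A J : A \subset X -> J \subset I :\ b -> v A <= u (A :|: J).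
Proof.
have [n] := ubnP #|N :\: (A :|: J)|; elim: n A J => // n IH A J size_lt AX JIb.
have JI : J \subset I by apply: subset_trans JIb (subsetDl _ _).
have SN : A :|: J \subset N by rewrite subUset outsiders_subset // (subset_trans JI IN).
have bS : b \notin A :|: J.
  by rewrite in_setU negb_or notin_outsiders //=; apply/negP => /(subsetP JIb); rewrite setD11.
have SW : A :|: J \notin W by apply: contra bS => /yb.
have [AIW|AIW] := boolP (A :|: I \in W).
  apply: le_trans (alpha_le1 _ _ _ _) (alpha_sum_ge1_losing _ _ _ _ _) => //.
  by rewrite -setUA (setUidPr JI).
have joinersX : X :\: A \subset loyal_joiners N W (A :|: J).
  apply/subsetP => m; rewrite !inE => /andP[mA /andP[mI mN]].
  have mJ : m \notin J by apply: contraNN mI => /(subsetP JI).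
  rewrite (negbTE mA) (negbTE mJ) mN /=; apply: contra bS => /yb.
  by rewrite !inE => /orP[/eqP bm|//]; move: mI; rewrite -bm bI.
apply: (mean_le (x := b) joinersX (alpha_ge0 _ _ _ _) (alpha_sum_ge0 _ _ _ _)
  (bloc_alpha_losing_mean AX AIW) (alpha_sum_losing_mean W_monotone IN SN SW)).
- by move=> m _; apply: alpha_sum_ge0.
- move=> m mXA; have mJ := subsetP joinersX m mXA.
  rewrite setUA; apply: IH.
  - by rewrite -setUA; apply: leq_trans (card_joiner_lt mJ) _; rewrite -ltnS.
  - by move: mXA; rewrite inE subUset sub1set => /andP[_ ->].
  - exact: JIb.
- move=> m; rewrite inE => /andP[mXA mJ] mb.
  have [mAJ mN] : m \notin A :|: J /\ m \in N by move: mJ; rewrite !inE => /andP[/andP[-> ->]].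
  have mA : m \notin A by apply: contraNN mAJ => mA; rewrite in_setU mA.
  rewrite setUCA; apply: IH => //.
    by rewrite -setUCA; apply: leq_trans (card_joiner_lt mJ) _; rewrite -ltnS.
  rewrite subUset sub1set JIb andbT !inE mb /=; apply: contraR mXA => mI.
  by rewrite !inE mA mI mN.
Qed.

Lemma bloc_pair_le_yes A J : A \subset X -> J \subset I :\ b ->
  v A + v (i |: A) <= u (A :|: J) + u (A :|: (b |: J)).
Proof.
move=> AX JIb; have JI : J \subset I by apply: subset_trans JIb (subsetDl _ _).
have [AIW|AIW] := boolP (A :|: I \in W).
  have ge1 B : B \subset I -> 1 <= u (A :|: B).
    move=> BI; apply: (alpha_sum_ge1_yes_blocker W_monotone IN bI yb).
      by rewrite subUset outsiders_subset // (subset_trans BI).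
    by rewrite -setUA (setUidPr BI).
  by apply: lerD; apply: le_trans (alpha_le1 _ _ _ _) (ge1 _ _); rewrite ?subUset ?sub1set ?bI.
apply: lerD; first exact: bloc_alpha_le_yes.
rewrite alpha_losing_mem ?alpha_sum_ge0 ?setU11 ?bloc_game_in //.
by rewrite bloc_playersE setUS.
Qed.
End YesBlocker.

Section NoBlocker.
Hypothesis nb : no_blocker N W b.

Lemma bloc_alpha_winning_mean A : A \subset X -> A \in W ->
  v (i |: A) * #|A|.+1%:R = \sum_(m in A) v (i |: (A :\ m)).
Proof.
move=> AX AW; have iA := notin_outsiders iI AX.
have winning_in S : S \subset X -> i |: S \in G.
  move=> SX; rewrite bloc_game_in //; apply: no_blocker_winning nb _ _.
    by rewrite subUset outsiders_subset.
  by rewrite in_setU bI orbT.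
have AG : A \in G by rewrite bloc_game_out.
have iAN' : i |: A \subset bloc_players N I i by rewrite bloc_playersE setUS.
have leaversE : loyal_leavers G (i |: A) = i |: A.
  apply/setP => m; rewrite inE; have [->|mi] := eqVneq m i; first by rewrite setU11 setU1K.
  case mA: (m \in i |: A) => //=; rewrite setU1D1 // winning_in //.
  by apply: subset_trans (subsetDl _ _) AX.
have vA0 : v A = 0.
  by apply: alpha_winning_notin; rewrite // (subset_trans _ iAN') ?subsetU1.
have iAiG : (i |: A) :\ i \in G by rewrite setU1K.
have := alpha_winning iAN' (winning_in _ AX) (setU11 _ _) iAiG.
rewrite leaversE big_setU1 //= setU1K // vA0 add0r cardsU1 iA => ->.
apply: eq_bigr => m mA; rewrite setU1D1 //.
by apply: contraNneq iA => <-.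
Qed.

Lemma bloc_alpha_le_no A J :
  A \subset X -> J \subset I :\ b -> v (i |: A) <= u (A :|: (b |: J)).
Proof.
have [n] := ubnP #|A :|: J|; elim: n A J => // n IH A J size_lt AX JIb.
have JI : J \subset I by apply: subset_trans JIb (subsetDl _ _).
have bJI : b |: J \subset I by rewrite subUset sub1set bI JI.
have SN : A :|: (b |: J) \subset N by rewrite subUset outsiders_subset // (subset_trans bJI IN).
have SW : A :|: (b |: J) \in W by apply: no_blocker_winning nb SN _; rewrite !inE eqxx orbT.
have [AW|AW] := boolP (A \in W); last first.
  apply: le_trans (alpha_le1 _ _ _ _) (alpha_sum_ge1_winning _ _ _ _) => //.
  by rewrite setDU_outsiders.
have mNI m : m \in A -> m \notin I by move=> /(subsetP AX); rewrite inE => /andP[].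
have shrink m : m \in A :|: J -> (#|(A :|: J) :\ m| < n)%N.
  by move=> mAJ; have := cardsD1 m (A :|: J); rewrite mAJ; lia.
have leaversA : A \subset loyal_leavers W (A :|: (b |: J)).
  apply/subsetP => m mA; rewrite inE in_setU mA /=.
  apply: no_blocker_winning nb (subset_trans (subsetDl _ _) SN) _.
  rewrite !inE eqxx orbT andbT; apply: contraNneq (mNI m mA) => <-; exact: bI.
apply: (mean_le (x := b) leaversA (alpha_ge0 _ _ _ _) (alpha_sum_ge0 _ _ _ _)
  (bloc_alpha_winning_mean AX AW) (alpha_sum_winning_mean W_monotone I SN SW)).
- by move=> m _; apply: alpha_sum_ge0.
- move=> m mA; have mbJ : m \notin b |: J by apply: contra (mNI m mA) => /(subsetP bJI).
  have mJ : m \notin J by apply: contraNN mbJ => mJ; rewrite in_setU1 mJ orbT.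
  rewrite setDUl (setD1_id mbJ); apply: IH => //.
    by rewrite -(setD1_id mJ) -setDUl; apply: shrink; rewrite in_setU mA.
  exact: subset_trans (subsetDl _ _) AX.
- move=> m; rewrite inE => /andP[mA mL] mb.
  have mJ : m \in J.
    by move: mL; rewrite !inE (negbTE mA) (negbTE mb) /= => /andP[].
  rewrite setDUl (setD1_id mA) setU1D1 //; apply: IH => //.
    by rewrite -(setD1_id mA) -setDUl; apply: shrink; rewrite in_setU mJ orbT.
  exact: subset_trans (subsetDl _ _) JIb.
Qed.

Lemma bloc_pair_le_no A J : A \subset X -> J \subset I :\ b ->
  v A + v (i |: A) <= u (A :|: J) + u (A :|: (b |: J)).
Proof.
move=> AX JIb; have JI : J \subset I by apply: subset_trans JIb (subsetDl _ _).
have [AW|AW] := boolP (A \in W); last first.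
  have ge1 B : B \subset I -> 1 <= u (A :|: B).
    move=> BI; apply: (alpha_sum_ge1_no_blocker W_monotone IN bI nb).
      by rewrite subUset outsiders_subset // (subset_trans BI).
    by rewrite setDU_outsiders.
  by apply: lerD; apply: le_trans (alpha_le1 _ _ _ _) (ge1 _ _); rewrite ?subUset ?sub1set ?bI.
rewrite alpha_winning_notin ?add0r ?bloc_game_out ?notin_outsiders //.
  by apply: le_trans (bloc_alpha_le_no AX JIb) _; rewrite lerDr alpha_sum_ge0.
by rewrite bloc_playersE (subset_trans AX) ?subsetU1.
Qed.
End NoBlocker.
End BlocGame.

Lemma setIUl_disjoint (T : finType) (X Y A B : {set T}) :
  [disjoint X & Y] -> A \subset X -> B \subset Y -> (A :|: B) :&: X = A.
Proof.
move=> dXY AX BY; rewrite setIUl (setIidPl AX) (_ : B :&: X = set0) ?setU0 //.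
by apply: disjoint_setI0; apply: disjointWl BY _; rewrite disjoint_sym.
Qed.

Section PowersetSums.
Variables (R : nmodType) (T : finType).
Implicit Types (X Y : {set T}) (F : {set T} -> R).

Lemma sum_powerset_disjU X Y F : [disjoint X & Y] ->
  \sum_(S in powerset (X :|: Y)) F S =
  \sum_(A in powerset X) \sum_(B in powerset Y) F (A :|: B).
Proof.
move=> dXY.
set D := [pred p : {set T} * {set T} | (p.1 \in powerset X) && (p.2 \in powerset Y)].
have inj : {in D &, injective (fun p : {set T} * {set T} => p.1 :|: p.2)}.
  move=> [A B] [A' B']; rewrite !inE /= => /andP[AX BY] /andP[A'X B'Y] e.
  have dYX : [disjoint Y & X] by rewrite disjoint_sym.
  congr (_, _); first by rewrite -(setIUl_disjoint dXY AX BY) e (setIUl_disjoint dXY A'X B'Y).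
  by rewrite -(setIUl_disjoint dYX BY AX) setUC e setUC (setIUl_disjoint dYX B'Y A'X).
rewrite pair_big_dep (eq_bigl [in D]) // -(big_imset F inj); apply: eq_bigl => S.
apply/idP/imsetP => [|[[A B]]]; last first.
  by rewrite !inE /= => /andP[AX BY] ->; apply: setUSS.
rewrite powersetE => SXY; exists (S :&: X, S :&: Y); first by rewrite !inE !subsetIr.
by rewrite /= -setIUr (setIidPl SXY).
Qed.

Lemma sum_powersetU1 x X F : x \notin X ->
  \sum_(S in powerset (x |: X)) F S = \sum_(A in powerset X) (F A + F (x |: A)).
Proof.
move=> xX; rewrite setUC sum_powerset_disjU; last by rewrite disjoint_sym disjoints1.
apply: eq_bigr => A _; rewrite powerset1 big_setU1 ?big_set1 /= ?setU0 1?setUC //.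
by rewrite inE; apply/eqP => /setP/(_ x); rewrite !inE eqxx.
Qed.
End PowersetSums.

Lemma RM'_bloc_mean (T : finType) (N : {set T}) (W : {set {set T}}) (I : {set T}) (i : T) :
  i \in I ->
  RM'_bloc N W I i * (2 ^ #|N :\: I|.+1)%:R =
  \sum_(A in powerset (N :\: I))
    (alpha (bloc_players N I i) (bloc_game N W I i) i A +
     alpha (bloc_players N I i) (bloc_game N W I i) i (i |: A)).
Proof.
move=> iI; have iX : i \notin N :\: I by rewrite inE iI.
rewrite /RM'_bloc /RM'; set v := alpha _ _ i.
by rewrite bloc_playersE sum_powersetU1 // cardsU1 iX divfK // pnatr_eq0 expn_eq0.
Qed.

Lemma sum_RM'_mean (T : finType) (N : {set T}) (W : {set {set T}}) (I : {set T}) (b : T) :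
  I \subset N -> b \in I ->
  (\sum_(k in I) RM' N W k) * (2 ^ #|N :\: I|.+1 * 2 ^ #|I :\ b|)%:R =
  \sum_(A in powerset (N :\: I)) \sum_(J in powerset (I :\ b))
    (alpha_sum N W I (A :|: J) + alpha_sum N W I (A :|: (b |: J))).
Proof.
move=> IN bI.
have NE : N = (N :\: I) :|: I.
  apply/setP => x; rewrite !inE.
  by case: (boolP (x \in I)) => [/(subsetP IN)->|]; rewrite ?orbT ?orbF.
have cardN : (2 ^ #|N :\: I|.+1 * 2 ^ #|I :\ b| = 2 ^ #|N|)%N.
  rewrite -expnD -(cardsID I N) (setIidPr IN) (cardsD1 b I) bI; f_equal; lia.
rewrite cardN /RM' -mulr_suml exchange_big /= divfK ?pnatr_eq0 ?expn_eq0 //.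
rewrite [X in powerset X]NE (sum_powerset_disjU _ (outsiders_disjoint (subxx _))).
apply: eq_bigr => A _; rewrite -{1}(setD1K bI) sum_powersetU1 ?setD11 //.
Qed.

Theorem theorem3 (T : finType) (N : {set T}) (W : {set {set T}})
  (I : {set T}) (i : T) :
  is_SVG N W -> I \subset N -> i \in I ->
  ((exists2 b, b \in I & yes_blocker W b) \/
   (exists2 b, b \in I & no_blocker N W b)) ->
  RM'_bloc N W I i <= \sum_(k in I) RM' N W k.
Proof.
move=> [_ _ W_monotone _ _] IN iI blockers.
set v := alpha (bloc_players N I i) (bloc_game N W I i) i.
set u := alpha_sum N W I.
have [b bI pair_le] : exists2 b, b \in I & forall A J : {set T}, A \subset N :\: I ->
    J \subset I :\ b -> v A + v (i |: A) <= u (A :|: J) + u (A :|: (b |: J)).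
  case: blockers => -[b bI blocker]; exists b => // A J.
    exact: bloc_pair_le_yes.
  exact: bloc_pair_le_no.
rewrite -(ler_pM2r (_ : 0 < (2 ^ #|N :\: I|.+1 * 2 ^ #|I :\ b|)%:R)); last first.
  by rewrite ltr0n muln_gt0 !expn_gt0.
rewrite sum_RM'_mean // natrM mulrA RM'_bloc_mean // mulr_suml.
apply: ler_sum => A; rewrite powersetE => AX.
rewrite -card_powerset mulr_natr -sumr_const; apply: ler_sum => J.
by rewrite powersetE => JIb; apply: pair_le.
Qed.
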